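(* Consider the ViSE model described in the context, with $n$ participants, $\ell$ egoists and $g=n-\ell$ group members ($1\le\ell\le n-1$), $\mu\in\mathbb{R}$, $\sigma>0$ and majority threshold $\alpha\in[0,1)$; let $\delta=\ell/n$, $\gamma=\alpha+\delta-1$, $\beta=\ell/(n-\ell)$, and let $t_0$ be the group's claims threshold maximizing the expected one-step capital increment of the society, namely $t_0=\frac{\beta}{F_{\gamma n}-F_{\alpha n}}\big(\mu^+(\mu,\sigma,\ell,\alpha n)-\mu^+(\mu,\sigma,\ell,\gamma n)\big)$. Then: (i) if $\alpha<1-\delta$, then $t_0=\frac{\beta}{1-F_{\alpha n}}\big(\mu^+(\mu,\sigma,\ell,\alpha n)-\mu\big)$; (ii) if $\delta\le\alpha$, then $t_0=-\frac{\beta}{F_{\gamma n}}\,\mu^+(\mu,\sigma,\ell,\gamma n)$; (iii) if $\delta\le\alpha<1-\delta$, then $t_0=-\beta\mu$.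
   Context: ViSE model (one voting step). A society consists of $n$ participants: $\ell$ ''egoists'' and $g=n-\ell$ ''group members'', $1\le\ell\le n-1$. Fix $\mu\in\mathbb{R}$, $\sigma>0$, a majority threshold $\alpha$ and a group claims threshold $t\in\mathbb{R}$. A proposal is a random vector $(\zeta_1,\dots,\zeta_n)$ of independent $N(\mu,\sigma^2)$ random variables, $\zeta_i$ being the proposed capital increment of participant $i$. Each egoist votes for the proposal iff his own component is strictly positive. All group members vote for the proposal iff the arithmetic mean of the group members' components is strictly greater than $t$; otherwise they all vote against. The proposal is accepted iff the number of votes for it is strictly greater than $\alpha n$. If accepted, each participant's capital increment equals his component; otherwise it is $0$. $F$ denotes the standard normal distribution function. $p=F(\mu/\sigma)$, $q=1-p$, and for real $\xi$, $F_\xi=\sum_{x=\max(0,[\xi]+1)}^{\ell}\binom{\ell}{x}p^xq^{\ell-x}$ ($[\xi]$ the integer part; empty sum $=0$), the probability that more than $\xi$ egoists vote for the proposal. For integer $\ell\ge1$ and real $\ell_0$, $\mu^+(\mu,\sigma,\ell,\ell_0)=\mathrm{M}\big(\xi_1\cdot\mathbf{1}\{\#\{i:\xi_i>0\}>\ell_0\}\big)$ where $\xi_1,\dots,\xi_\ell$ are i.i.d. $N(\mu,\sigma^2)$. *)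

From HB Require Import structures.
From mathcomp Require Import all_boot all_order all_algebra.
From mathcomp Require Import all_classical all_reals all_analysis.
From mathcomp Require Import normal_distribution.
Set Implicit Arguments. Unset Strict Implicit. Unset Printing Implicit Defensive.
Import Order.TTheory GRing.Theory Num.Theory.
Local Open Scope classical_set_scope.
Local Open Scope ring_scope.

Section ViSE.
Context {R : realType}.

Definition std_normal_cdf (x : R) : R := fine (normal_prob 0 1 `]-oo, x]).

(* p = F(mu/sigma): probability that an egoist votes for the proposal. *)
Definition vise_p (mu sigma : R) : R := std_normal_cdf (mu / sigma).

Definition vise_F (mu sigma : R) (l : nat) (xi : R) : R :=
  let p := vise_p mu sigma in
  \sum_(0 <= x < l.+1 | (Num.max 0 (Num.floor xi + 1) <= x%:Z)%R)
     'C(l, x)%:R * p ^+ x * (1 - p) ^+ (l - x).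

(* Expectation of h(xi_1,...,xi_k) for xi_i i.i.d. N(mu, sigma^2),
   computed as the iterated integral against the product of the
   normal distributions (first coordinate outermost). *)
Fixpoint gauss_iter (mu sigma : R) (k : nat) (h : seq R -> R) : R :=
  match k with
  | 0 => h [::]
  | k'.+1 => Rintegral (normal_prob mu sigma) setT
               (fun x => gauss_iter mu sigma k' (fun v => h (x :: v)))
  end.

Definition mu_plus (mu sigma : R) (l : nat) (l0 : R) : R :=
  gauss_iter mu sigma l
    (fun v => head 0 v * (if l0 < (count (fun y => 0 < y) v)%:R then 1 else 0)).

End ViSE.

(* If alpha < 1 - delta, the threshold gamma n is negative, so every vote count
   exceeds it: F_(gamma n) = 1 and mu^+(mu, sigma, l, gamma n) = M xi_1 = mu.
   If delta <= alpha, the threshold alpha n is at least l, so no count exceeds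
   it: F_(alpha n) = 0 and mu^+(mu, sigma, l, alpha n) = 0.  Substituting into
   t0 gives (i)-(iii).  The only analytic input is that N(mu, sigma^2) has mean
   mu: since -sigma^2 phi is a primitive of (x - mu) phi for the Gaussian kernel
   phi, the positive and negative parts of x - mu have the same finite integral. *)

From HB Require Import structures.
From mathcomp Require Import all_boot all_order all_algebra.
From mathcomp Require Import all_classical all_reals all_analysis.
From mathcomp Require Import normal_distribution.
From mathcomp Require Import measurable_realfun zify ring lra.
Import Order.TTheory GRing.Theory Num.Theory.
Local Open Scope ring_scope.
Import numFieldNormedType.Exports.

Section normal_first_moment.
Context {R : realType}.
Local Open Scope classical_set_scope.

Lemma is_derive_normal_fun (m s x : R) : s != 0 ->
  is_derive x 1 (fun y => - s ^+ 2 * normal_fun m s y) ((x - m) * normal_fun m s x).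
Proof.
move=> s0; rewrite /normal_fun; apply: is_derive_eq.
by rewrite scaler0 add0r subr0 !scaler1 /GRing.scale /=; field.
Qed.

Lemma cvgy_normal_fun (m s : R) : s != 0 -> normal_fun m s x @[x --> +oo] --> 0.
Proof.
move=> s0; have k0 : 0 < s ^+ 2 *+ 2 by rewrite pmulrn_lgt0 // exprn_even_gt0.
rewrite /normal_fun.
have -> : (fun x => expR (- (x - m) ^+ 2 / (s ^+ 2 *+ 2))) =
    (fun y => expR (- y)) \o (fun x => (x - m) ^+ 2 / (s ^+ 2 *+ 2)).
  by apply/funext => x /=; rewrite mulNr.
apply: cvg_comp; last exact: cvgr_expR.
apply/cvgryPge => A; near=> x.
have x_ge1 : 1 + m <= x by near: x; apply: nbhs_pinfty_ge; rewrite num_real.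
have x_geA : `|A| * (s ^+ 2 *+ 2) + m <= x.
  by near: x; apply: nbhs_pinfty_ge; rewrite num_real.
have A_le : A * (s ^+ 2 *+ 2) <= `|A| * (s ^+ 2 *+ 2) by rewrite ler_pM2r // ler_norm.
rewrite ler_pdivlMr // expr2; nra.
Unshelve. all: by end_near.
Qed.

Lemma continuous_center_normal_fun (m s : R) :
  continuous (fun x => (x - m) * normal_fun m s x).
Proof.
by move=> x; apply/differentiable_continuous/derivable1_diffP; rewrite /normal_fun.
Qed.

Lemma integral_center_normal_fun_itvcy (m s : R) : s != 0 ->
  (\int[lebesgue_measure]_(x in `[m, +oo[) ((x - m) * normal_fun m s x)%:E
   = (s ^+ 2)%:E)%E.
Proof.
move=> s0; have dF x := @is_derive_normal_fun m s x s0.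
rewrite (@ge0_continuous_FTC2y _ _ (fun y : R => - s ^+ 2 * normal_fun m s y) m 0).
- by rewrite /normal_fun subrr expr0n /= oppr0 mul0r expR0 mulr1 add0e opprK.
- by move=> x mx; rewrite mulr_ge0 ?subr_ge0 ?normal_fun_ge0.
- exact/continuous_subspaceT/continuous_center_normal_fun.
- rewrite -(mulr0 (- s ^+ 2)); apply: cvgMl_tmp; exact: cvgy_normal_fun.
- by move=> x _; case: (dF x).
- apply: cvg_at_right_filter; case: (dF m) => /derivable1_diffP.
  by move=> /differentiable_continuous.
- by move=> x _; rewrite derive1E; case: (dF x) => _ ->.
Qed.

Lemma integral_center_normal_fun_itvNyc (m s : R) : s != 0 ->
  (\int[lebesgue_measure]_(x in `]-oo, m]) ((m - x) * normal_fun m s x)%:E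
   = (s ^+ 2)%:E)%E.
Proof.
move=> s0.
have := @ge0_integration_by_substitutionNy R
  (fun x => (m - x) * normal_fun m s x) (- m).
rewrite opprK => ->.
- rewrite -(integral_center_normal_fun_itvcy (- m) s s0).
  apply: eq_integral => x _ /=; congr EFin.
  by rewrite /normal_fun; congr (_ * expR (- _ / _)); ring.
- apply: continuous_subspaceT => x.
  have -> : (fun x => (m - x) * normal_fun m s x) =
      - (fun x => (x - m) * normal_fun m s x).
    by apply/funext => y /=; rewrite -mulNr opprB.
  exact/continuousN/continuous_center_normal_fun.
- move=> x; rewrite in_itv /= => xm.
  by rewrite mulr_ge0 ?subr_ge0 ?normal_fun_ge0 // ltW.
Qed.

Lemma ge0_integral_normal_prob (m s : R) (f : R -> \bar R) :
  measurable_fun [set: R] f -> (forall x, 0 <= f x)%E ->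
  (\int[normal_prob m s]_x f x
   = \int[lebesgue_measure]_x (f x * (normal_pdf m s x)%:E))%E.
Proof.
move=> mf f0; have N_ll := normal_prob_dominates m s.
rewrite -(Radon_Nikodym_SigmaFinite.change_of_variables N_ll f0 measurableT mf).
have mRN : measurable_fun setT (Radon_Nikodym_SigmaFinite.f (normal_prob m s)
    lebesgue_measure).
  exact: measurable_int (Radon_Nikodym_SigmaFinite.f_integrable N_ll).
apply: ae_eq_integral => //.
- exact: emeasurable_funM.
- apply: emeasurable_funM => //; apply/measurable_EFinP.
  exact: measurable_normal_pdf.
- apply: ae_eqe_mul2l; apply: ae_eq_sym; apply: integral_ae_eq => //.
  + exact: integrable_normal_pdf.
  + by move=> E _ mE; rewrite -(Radon_Nikodym_SigmaFinite.f_integral N_ll mE).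
Qed.

Lemma integral_normal_prob_funepos_center (m s : R) : s != 0 ->
  (\int[normal_prob m s]_x ((fun x => (x - m)%:E)^\+ x)
   = (normal_peak s * s ^+ 2)%:E)%E.
Proof.
move=> s0; have mG : measurable_fun [set: R] (fun x => (x - m)%:E).
  exact/measurable_EFinP/measurable_funB.
rewrite ge0_integral_normal_prob; last 2 first.
- exact: measurable_funepos.
- by move=> x; exact: funepos_ge0.
rewrite (normal_pdfE _ s0).
transitivity (\int[lebesgue_measure]_(x in `[m, +oo[)
    ((normal_peak s)%:E * ((x - m) * normal_fun m s x)%:E))%E.
  rewrite [RHS]integral_mkcond; apply: eq_integral => x _.
  rewrite funeposE patchE -EFin_max -!EFinM mem_setE in_itv /= andbT.
  have [mx|xm] := leP m x.
    by rewrite (max_idPl _) ?subr_ge0 //; congr EFin; ring.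
  by rewrite (max_idPr _) ?mul0r // subr_le0 ltW.
rewrite ge0_integralZl_EFin ?normal_peak_ge0 //.
- by rewrite integral_center_normal_fun_itvcy // -EFinM.
- move=> x; rewrite /= in_itv /= andbT => mx.
  by rewrite lee_fin mulr_ge0 ?subr_ge0 ?normal_fun_ge0.
- apply/measurable_funTS/measurable_EFinP/measurable_funM.
    exact: measurable_funB.
  exact: measurable_normal_fun.
Qed.

Lemma integral_normal_prob_funeneg_center (m s : R) : s != 0 ->
  (\int[normal_prob m s]_x ((fun x => (x - m)%:E)^\- x)
   = (normal_peak s * s ^+ 2)%:E)%E.
Proof.
move=> s0; have mG : measurable_fun [set: R] (fun x => (x - m)%:E).
  exact/measurable_EFinP/measurable_funB.
rewrite ge0_integral_normal_prob; last 2 first.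
- exact: measurable_funeneg.
- by move=> x; exact: funeneg_ge0.
rewrite (normal_pdfE _ s0).
transitivity (\int[lebesgue_measure]_(x in `]-oo, m])
    ((normal_peak s)%:E * ((m - x) * normal_fun m s x)%:E))%E.
  rewrite [RHS]integral_mkcond; apply: eq_integral => x _.
  rewrite funenegE patchE -EFinN -EFin_max -!EFinM mem_setE in_itv /=.
  have [xm|mx] := leP x m.
    by rewrite (max_idPl _) ?opprB ?subr_ge0 //; congr EFin; ring.
  by rewrite (max_idPr _) ?mul0r // opprB subr_le0 ltW.
rewrite ge0_integralZl_EFin ?normal_peak_ge0 //.
- by rewrite integral_center_normal_fun_itvNyc // -EFinM.
- move=> x; rewrite /= in_itv /= => xm.
  by rewrite lee_fin mulr_ge0 ?subr_ge0 ?normal_fun_ge0.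
- apply/measurable_funTS/measurable_EFinP/measurable_funM.
    exact: measurable_funB.
  exact: measurable_normal_fun.
Qed.

Lemma normal_mean (m s : R) : s != 0 -> Rintegral (normal_prob m s) setT id = m.
Proof.
move=> s0; set G := fun x : R => (x - m)%:E.
have mG : measurable_fun [set: R] G by exact/measurable_EFinP/measurable_funB.
have hp := integral_normal_prob_funepos_center m s s0.
have hn := integral_normal_prob_funeneg_center m s s0.
have iG : (normal_prob m s).-integrable setT (EFin \o (fun x => x - m)).
  apply/integrableP; split; first exact: mG.
  rewrite (_ : (\int[_]_x _ = \int[normal_prob m s]_x (G^\+ x + G^\- x))%E).
    rewrite ge0_integralD //.
    - by rewrite hp hn -EFinD ltry.
    - exact: measurable_funepos.
    - exact: measurable_funeneg.
  by apply: eq_integral => x _; have := congr1 (fun h => h x) (fune_abse G).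
have iG0 : (\int[normal_prob m s]_x G x = 0)%E by rewrite integralE hp hn subee.
have -> : id = (fun x => (x - m) + m) by apply/funext => x; rewrite subrK.
rewrite RintegralD //; last exact: finite_measure_integrable_cst.
rewrite Rintegral_cst // [X in m * fine X]probability_setT mulr1.
by rewrite /Rintegral iG0 add0r.
Qed.

End normal_first_moment.

Section vise.
Context {R : realType}.
Implicit Types (mu sigma xi : R) (l : nat).

Lemma eq_gauss_iter mu sigma k (h h' : seq R -> R) :
  (forall v, size v = k -> h v = h' v) ->
  gauss_iter mu sigma k h = gauss_iter mu sigma k h'.
Proof.
elim: k h h' => [|k IH] h h' hh' /=; first exact: hh'.
congr Rintegral; apply/funext => x; apply: IH => v sv.
by apply: hh'; rewrite /= sv.
Qed.

Lemma gauss_iter_cst mu sigma k (c : R) : gauss_iter mu sigma k (fun=> c) = c.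
Proof.
elim: k => [|k IH] //=.
by rewrite IH Rintegral_cst // [X in c * fine X]probability_setT mulr1.
Qed.

Lemma vise_F_lt0 mu sigma l xi : xi < 0 -> vise_F mu sigma l xi = 1.
Proof.
move=> xi_lt0; rewrite /vise_F.
have -> : Num.max 0 (Num.floor xi + 1) = 0.
  by apply/max_idPl; rewrite lezD1 floor_lt0.
rewrite (eq_bigl xpredT) //= big_mkord.
transitivity ((1 - vise_p mu sigma + vise_p mu sigma) ^+ l).
  by rewrite exprDn; apply: eq_bigr => i _; rewrite -mulr_natl; ring.
by rewrite subrK expr1n.
Qed.

Lemma vise_F_ge mu sigma l xi : l%:R <= xi -> vise_F mu sigma l xi = 0.
Proof.
move=> l_le_xi; rewrite /vise_F big_nat_cond big1 // => i /andP[/andP[_ i_le_l] hi].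
have : Num.floor xi + 1 <= i%:Z by rewrite (le_trans _ hi) // le_max lexx orbT.
have : l%:Z <= Num.floor xi by rewrite floor_ge_int.
lia.
Qed.

Lemma mu_plus_ge mu sigma l (l0 : R) : l%:R <= l0 -> mu_plus mu sigma l l0 = 0.
Proof.
move=> l_le_l0; rewrite /mu_plus (@eq_gauss_iter _ _ _ _ (fun=> 0)).
  exact: gauss_iter_cst.
move=> v sv; have cnt_le : (count (fun y : R => 0 < y) v)%:R <= l%:R :> R.
  by rewrite ler_nat -sv count_size.
by rewrite ifF ?mulr0 //; apply/negbTE; rewrite -leNgt (le_trans cnt_le).
Qed.

Lemma mu_plus_lt0 mu sigma l (l0 : R) : sigma != 0 -> (0 < l)%N -> l0 < 0 ->
  mu_plus mu sigma l l0 = mu.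
Proof.
move=> sigma0 l_gt0 l0_lt0; rewrite /mu_plus (@eq_gauss_iter _ _ _ _ (head 0)).
  case: l l_gt0 => // k _ /=; under eq_fun do rewrite gauss_iter_cst.
  exact: normal_mean.
by move=> v _; rewrite ifT ?mulr1 // (lt_le_trans l0_lt0).
Qed.

End vise.

Theorem mainTheorem4 (R : realType) (n l : nat) (mu sigma alpha : R) :
  (1 <= l)%N -> (l <= n - 1)%N -> 0 < sigma -> 0 <= alpha -> alpha < 1 ->
  let delta := l%:R / n%:R in
  let gamma := alpha + delta - 1 in
  let beta := l%:R / (n - l)%:R in
  let t0 := beta / (vise_F mu sigma l (gamma * n%:R) - vise_F mu sigma l (alpha * n%:R))
            * (mu_plus mu sigma l (alpha * n%:R) - mu_plus mu sigma l (gamma * n%:R)) in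
  (alpha < 1 - delta ->
     t0 = beta / (1 - vise_F mu sigma l (alpha * n%:R))
          * (mu_plus mu sigma l (alpha * n%:R) - mu)) /\
  (delta <= alpha ->
     t0 = - (beta / vise_F mu sigma l (gamma * n%:R)) * mu_plus mu sigma l (gamma * n%:R)) /\
  (delta <= alpha < 1 - delta -> t0 = - (beta * mu)).
Proof.
move=> l_gt0 l_lt_n sigma_gt0 _ _ delta gamma beta t0.
have n_gt0 : 0 < n%:R :> R by rewrite ltr0n; lia.
have delta_n : delta * n%:R = l%:R by rewrite /delta divfK // gt_eqF.
have gamma_regime : alpha < 1 - delta -> vise_F mu sigma l (gamma * n%:R) = 1 /\
    mu_plus mu sigma l (gamma * n%:R) = mu.
  move=> alpha_lt; have gamma_n_lt0 : gamma * n%:R < 0 by rewrite /gamma; nra.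
  by rewrite vise_F_lt0 // mu_plus_lt0 // gt_eqF.
have alpha_regime : delta <= alpha -> vise_F mu sigma l (alpha * n%:R) = 0 /\
    mu_plus mu sigma l (alpha * n%:R) = 0.
  move=> delta_le; have l_le_alpha_n : l%:R <= alpha * n%:R by nra.
  by rewrite vise_F_ge // mu_plus_ge.
split; [|split]; rewrite /t0.
- by move=> /gamma_regime[-> ->].
- by move=> /alpha_regime[-> ->]; rewrite subr0 sub0r mulrN mulNr.
- by move=> /andP[/alpha_regime[-> ->] /gamma_regime[-> ->]]; rewrite subr0 sub0r divr1 mulrN.
Qed.
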